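(* For all fixed $\alpha,\delta\in(0,1)$ there is a constant $C>0$ such that for every sufficiently large $n$ there is a Boolean function $f:\{0,1\}^n\to\{0,1\}$ with $\mu(f)=\lceil \alpha 2^n\rceil 2^{-n}$ (so $\mu(f)=\alpha$ up to the unavoidable rounding to a multiple of $2^{-n}$) such that $$J^+_S(f)<1-n^{-C}\quad\text{for every } S\subseteq[n] \text{ with } |S|=\lfloor(1/2-\delta)n\rfloor .$$
   Context: $[n]=\{1,\dots,n\}$. For a finite set $T$, $\Omega(T)=\{0,1\}^T$ and $\mu_T$ is the uniform probability measure on $\Omega(T)$; $\mu=\mu_{[n]}$, and for Boolean $f$, $\mu(f)=\mu(\{x:f(x)=1\})$. Points of $\Omega([n])$ are written $(u,v)$ with $u\in\Omega([n]\setminus S)$, $v\in\Omega(S)$. For $S\subseteq[n]$, $J^+_S(f)=\mu_{[n]\setminus S}(\{u\in\Omega([n]\setminus S):\exists v\in\Omega(S),\ f(u,v)=1\})$, i.e. the probability that a uniformly random setting of the variables outside $S$ does not force $f=0$. (The influence of $S$ toward one is $I^+_S(f)=J^+_S(f)-\mu(f)$.) *)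

From mathcomp Require Import all_boot.
From Stdlib Require Import Reals.
Set Implicit Arguments. Unset Strict Implicit. Unset Printing Implicit Defensive.

(* [n] is 'I_n (indices 0..n-1); Omega(T) for T : {set 'I_n}. *)
Definition Omega n (T : {set 'I_n}) := {ffun {i : 'I_n | i \in T} -> bool}.

Definition cube n := {ffun 'I_n -> bool}.

(* the point (u,v) of Omega([n]) with u in Omega([n]\S), v in Omega(S) *)
Definition glue n (S : {set 'I_n}) (u : Omega (~: S)) (v : Omega S) : cube n :=
  [ffun i => match @insub _ (fun j => j \in S) _ i with
             | Some j => v j
             | None => match @insub _ (fun j => j \in ~: S) _ i with
                       | Some j => u j
                       | None => false
                       end
             end].

Local Open Scope R_scope.

Definition mu n (f : cube n -> bool) : R :=
  INR #|[set x : cube n | f x]| / INR #|{: cube n}|.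

Definition Jplus n (S : {set 'I_n}) (f : cube n -> bool) : R :=
  INR #|[set u : Omega (~: S) | [exists v : Omega S, f (glue u v)]]|
  / INR #|{: Omega (~: S)}|.

Definition is_ceil (x : R) (k : nat) : Prop := INR k - 1 < x <= INR k.
Definition is_floor (x : R) (k : nat) : Prop := INR k <= x < INR k + 1.

From Stdlib Require Import Reals Lra.
From mathcomp Require Import all_boot zify.
Set Implicit Arguments. Unset Strict Implicit. Unset Printing Implicit Defensive.

(* Fix r with r * delta >= 1. Cut [n] into blocks of b = O(log n) consecutive
   coordinates and call a point of the cube balanced when every block contains
   fewer than th = (r+1)/(2r) * b zeros. Then
   - balanced points have density 1 - O(2^-c0): a weighted counting argument
     (an exponential moment bound, [zeros_tail]) shows that a block has at least
     th zeros with probability 2^-Omega(b), and a union bound over the blocks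
     concludes ([unbalanced_count]);
   - if |S| <= (1/2 - delta) n, the free coordinates ~: S fill at least th
     positions of some block ([block_averaging]), so setting those th free
     coordinates to 0 forces every point to be unbalanced ([balanced_killing]).
     Hence J^+_S <= 1 - 2^-th ([Jplus_killed]), and 2^th is polynomial in n
     since b = O(log n) ([exp_log_poly]).
   The function f of the theorem is the indicator of any ceil(alpha 2^n) balanced
   points. *)

Lemma weight_mono r th z b : th <= z -> z <= b ->
  r.+1 ^ th * r ^ (b - th) <= r.+1 ^ z * r ^ (b - z).
Proof.
move=> le_th_z le_z_b.
have -> : b - th = (z - th) + (b - z) by lia.
have -> : r.+1 ^ z = r.+1 ^ th * r.+1 ^ (z - th) by rewrite -expnD; congr (_ ^ _); lia.
rewrite expnD -!mulnA leq_mul2l leq_mul2r; apply/orP; right; apply/orP; right.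
by elim: (z - th) => // e IH; rewrite !expnS leq_mul.
Qed.

Section CubeCounting.
Variable I : finType.
Implicit Types (A B : {set I}) (x u : {ffun I -> bool}).

Definition zeros B x : nat := #|[set i in B | ~~ x i]|.

Lemma sum_prod_cube (F : I -> bool -> nat) :
  \sum_(x : {ffun I -> bool}) \prod_i F i (x i) = \prod_i (F i true + F i false).
Proof.
rewrite -bigA_distr_bigA; apply: eq_bigr => i _; exact: big_bool.
Qed.

Lemma zero_weight_prod B x r :
  \prod_i (if i \in B then (if x i then r else r.+1) else 1)
  = r.+1 ^ zeros B x * r ^ (#|B| - zeros B x).
Proof.
rewrite -big_mkcond /= (bigID (fun i => ~~ x i)) /=.
rewrite (eq_bigr (fun=> r.+1)); last by move=> i /andP[_ /negbTE ->].
rewrite [X in _ * X](eq_bigr (fun=> r)); last by move=> i /andP[_]; rewrite negbK => ->.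
rewrite !prod_nat_const -(cardsID [set i | ~~ x i] B) /zeros.
have -> : B :&: [set i | ~~ x i] = [set i in B | ~~ x i].
  by apply/setP => i; rewrite !inE.
rewrite addKn; congr (_ ^ _ * _ ^ _); apply: eq_card => i; rewrite !inE ?negbK //.
by rewrite unfold_in /= negbK andbC.
Qed.

(* Exponential-moment (Chernoff) bound: under the weight of zero_weight_prod, points
   with at least th zeros in B weigh at least (r+1)^th r^(|B|-th) each, while the
   whole cube weighs (2r+1)^|B| 2^(|I|-|B|) by sum_prod_cube. *)
Lemma zeros_tail B r th : th <= #|B| ->
  #|[set x | th <= zeros B x]| * (r.+1 ^ th * r ^ (#|B| - th)) * 2 ^ #|B|
  <= (r.+1 + r) ^ #|B| * 2 ^ #|I|.
Proof.
move=> le_th_B.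
pose F i (j : bool) := if i \in B then (if j then r else r.+1) else 1.
have total : \prod_i (F i true + F i false) = (r.+1 + r) ^ #|B| * 2 ^ #|~: B|.
  rewrite (bigID (mem B)) /= /F.
  rewrite (eq_bigr (fun=> r.+1 + r)); last by move=> i ->; rewrite addnC.
  rewrite [X in _ * X](eq_bigr (fun=> 2)); last by move=> i /negbTE ->.
  rewrite !prod_nat_const; congr (_ ^ _ * _ ^ _); apply: eq_card => i; rewrite !inE //.
have -> : 2 ^ #|I| = 2 ^ #|~: B| * 2 ^ #|B| by rewrite -expnD addnC cardsC.
rewrite [X in _ <= X]mulnA leq_mul2r -total -sum_prod_cube; apply/orP; right.
rewrite -[#|[set x | _]|]sum1_card big_distrl /=.
rewrite [X in _ <= X](bigID (fun x => x \in [set x | th <= zeros B x])) /=.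
apply: leq_trans (leq_addr _ _); apply: leq_sum => x; rewrite inE => le_th_x.
rewrite mul1n zero_weight_prod; apply: weight_mono => //.
by apply: subset_leq_card; apply/subsetP => i; rewrite inE => /andP[].
Qed.

Lemma card_vanishing A :
  #|[set u : {ffun I -> bool} | [forall k in A, u k == false]]| * 2 ^ #|A| = 2 ^ #|I|.
Proof.
pose F k (j : bool) : nat := if k \in A then nat_of_bool (~~ j) else 1.
have lhs : \sum_(u : {ffun I -> bool}) \prod_i F i (u i)
           = #|[set u : {ffun I -> bool} | [forall k in A, u k == false]]|.
  rewrite -sum1_card [RHS]big_mkcond /=; apply: eq_bigr => u _; rewrite inE.
  case: (boolP [forall k in A, _]) => [/forallP vanish | /forallPn [k]].
    by rewrite big1 // => k _; rewrite /F; case: ifP (vanish k) => //= _ /eqP ->.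
  by rewrite negb_imply => /andP[kA ukT]; rewrite (bigD1 k) //= /F kA; case: (u k) ukT.
have rhs : \prod_i (F i true + F i false) = 2 ^ #|~: A|.
  rewrite (bigID (mem A)) /= /F big1 ?mul1n; last by move=> i ->.
  rewrite (eq_bigr (fun=> 2)); last by move=> i /negbTE ->.
  by rewrite prod_nat_const; congr (_ ^ _); apply: eq_card => i; rewrite !inE.
by rewrite -lhs sum_prod_cube rhs -expnD addnC cardsC.
Qed.

Lemma avoiding_count (U : {set {ffun I -> bool}}) A :
  (forall u, (forall k, k \in A -> u k = false) -> u \notin U) ->
  #|U| * 2 ^ #|A| + 2 ^ #|I| <= 2 ^ #|I| * 2 ^ #|A|.
Proof.
move=> avoid; set Z := [set u : {ffun I -> bool} | [forall k in A, u k == false]].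
have sub_UZ : U \subset ~: Z.
  apply/subsetP => u uU; rewrite !inE; apply: contraL uU => /forallP vanish.
  by apply: avoid => k kA; apply/eqP; have := vanish k; rewrite kA.
have := subset_leq_card sub_UZ; have := card_vanishing A.
have : #|Z| + #|~: Z| = 2 ^ #|I| by rewrite cardsC card_ffun card_bool.
rewrite -/Z; move: #|U| #|Z| #|~: Z| (2 ^ #|A|) (2 ^ #|I|) => nU nZ nZc a m; nia.
Qed.

End CubeCounting.

Lemma exists_subset_card (T : finType) (A : {set T}) k : k <= #|A| ->
  exists2 B : {set T}, B \subset A & #|B| = k.
Proof.
move/card_geqP => [s [uniq_s size_s sub_sA]]; exists [set x in s].
  by apply/subsetP => x; rewrite inE => /sub_sA.
by rewrite cardsE -size_s; apply/card_uniqP.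
Qed.

(* Bernoulli-type inequality (1 + 1/X)^k (1 - k/X) <= 1, cleared of denominators. *)
Lemma bernoulli_drop X k : k <= X -> (X + 1) ^ k * (X - k) <= X ^ k.+1.
Proof.
elim: k => [|k IH] le_k_X; first by rewrite expn0 mul1n subn0 expn1.
have := IH (ltnW le_k_X); rewrite !expnS.
have : (X + 1) * (X - k.+1) <= X * (X - k) by nia.
move: ((X + 1) ^ k) (X ^ k) (X - k.+1) (X - k) => a c e f; nia.
Qed.

(* (1 + 1/X)^r < 1 + 1/r for X = 4r(r+1), cleared of denominators. *)
Lemma ratio_bound r : 0 < r -> r * (4 * r * r.+1 + 1) ^ r < r.+1 * (4 * r * r.+1) ^ r.
Proof.
move=> r_gt0; set X := 4 * r * r.+1.
have le_r_X : r <= X by rewrite /X; nia.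
have gap : r * X < r.+1 * (X - r) by rewrite /X; nia.
have Xr_gt0 : 0 < X ^ r by rewrite expn_gt0 /X; nia.
have := bernoulli_drop le_r_X; rewrite expnS.
move: gap Xr_gt0; move: ((X + 1) ^ r) (X ^ r) (X - r) => a c e gap c_gt0 le_ae_Xc.
have : r * (a * e) <= r * (X * c) by rewrite leq_mul2l le_ae_Xc orbT.
have : r * X * c < r.+1 * e * c by rewrite ltn_pmul2r.
nia.
Qed.

(* The two sides of zeros_tail for a block of 2r coordinates and threshold r+1:
   moment r is the total weight (2r+1)^(2r) and tail_weight r is the minimal weight
   (r+1)^(r+1) r^(r-1) of a point with r+1 zeros, times 2^(2r). *)
Definition moment r := (r.+1 + r) ^ (2 * r).
Definition tail_weight r := r.+1 ^ r.+1 * r ^ r.-1 * 2 ^ (2 * r).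

(* The ratio moment / tail_weight is below 1, i.e. (1 + 1/(2r))^(2r) < (1 + 1/r)^(r+1);
   this is what makes the tail of the zero count exponentially small. *)
Lemma moment_lt_tail_weight r : 0 < r -> moment r < tail_weight r.
Proof.
move=> r_gt0.
have moment_eq : (4 * r * r.+1 + 1) ^ r = moment r.
  by rewrite /moment mulnC expnM; congr (_ ^ _); rewrite -mulnn; nia.
have tail_eq : r * tail_weight r = r.+1 * (4 * r * r.+1) ^ r.
  rewrite /tail_weight expnM !expnMn.
  case: r r_gt0 {moment_eq} => // s _ /=.
  rewrite (expnS s.+2) (expnS s.+1 s).
  move: (s.+2 ^ s.+1) (s.+1 ^ s) (2 ^ s.+1) => a c e; nia.
by rewrite -(ltn_pmul2l r_gt0) tail_eq -moment_eq ratio_bound.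
Qed.

(* Bernoulli's inequality (1 + 1/P)^t >= 1 + t/P for D > P, cleared of denominators. *)
Lemma bernoulli_grow P D t : P < D -> P ^ t * (P + t) <= P * D ^ t.
Proof.
move=> lt_PD; elim: t => [|t IH]; first by rewrite !expn0; lia.
have le_pow : P ^ t <= D ^ t by elim: t {IH} => // t IH; rewrite !expnS leq_mul // ltnW.
have : P * D ^ t * P.+1 <= P * D ^ t * D by rewrite leq_mul2l lt_PD orbT.
rewrite !expnS; move: IH le_pow; move: (P ^ t) (D ^ t) => a c; nia.
Qed.

(* Taking t = P in bernoulli_grow: (D/P)^P >= 2. *)
Lemma doubling P D : 0 < P -> P < D -> 2 * P ^ P <= D ^ P.
Proof.
move=> P_gt0 lt_PD; have := bernoulli_grow P lt_PD.
rewrite -(leq_pmul2l P_gt0); move: (P ^ P) (D ^ P) => a c; nia.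
Qed.

Lemma block_tail (I : finType) (B : {set I}) r L : 0 < r ->
  #|B| = 2 * r * (moment r * L) ->
  #|[set x : {ffun I -> bool} | r.+1 * (moment r * L) <= zeros B x]| * 2 ^ L
  <= 2 ^ #|I|.
Proof.
move=> r_gt0 card_B; set M := moment r * L.
have le_th_B : r.+1 * M <= #|B| by rewrite card_B; nia.
have := zeros_tail r le_th_B.
have weight_eq : r.+1 ^ (r.+1 * M) * r ^ (#|B| - r.+1 * M) * 2 ^ #|B| = tail_weight r ^ M.
  rewrite card_B (_ : 2 * r * M - r.+1 * M = r.-1 * M); last by rewrite -mulnBl; congr (_ * _); lia.
  by rewrite /tail_weight !expnMn !expnM.
have moment_eq : (r.+1 + r) ^ #|B| = moment r ^ M by rewrite card_B /moment expnM.
rewrite -mulnA weight_eq moment_eq.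
have gain : 2 ^ L * moment r ^ M <= tail_weight r ^ M.
  rewrite /M !expnM -expnMn; elim: L {M le_th_B card_B weight_eq moment_eq} => // L IH.
  rewrite !expnS leq_mul //.
  apply: doubling; [by rewrite /moment expn_gt0 | exact: moment_lt_tail_weight].
have tail_gt0 : 0 < tail_weight r ^ M.
  by rewrite expn_gt0; have := moment_lt_tail_weight r_gt0; lia.
move=> tail_bound; rewrite -(leq_pmul2r tail_gt0); move: gain tail_bound.
move: #|[set x | _ <= _]| (moment r ^ M) (tail_weight r ^ M) (2 ^ L) (2 ^ #|I|) => a p d q e.
nia.
Qed.

Definition block n b j : {set 'I_n} := [set i : 'I_n | i %/ b == j].

Lemma card_ord_pred n (P : pred nat) : #|[set i : 'I_n | P i]| = \sum_(0 <= i < n) P i.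
Proof.
rewrite -sum1_card big_mkcond /= big_mkord.
by apply: eq_bigr => i _; rewrite inE; case: (P i).
Qed.

Lemma card_block n b j : 0 < b -> j.+1 * b <= n -> #|block n b j| = b.
Proof.
move=> b_gt0 le_jb_n; rewrite /block (card_ord_pred n (fun i => i %/ b == j)).
rewrite (big_cat_nat (n := j * b)) //=; last by lia.
rewrite (big_cat_nat (m := j * b) (n := j * b + b)) //=; try lia.
rewrite big_nat_cond big1; last by move=> i /andP[/andP[_ lt_i] _]; case: eqP => //= ?; lia.
rewrite [X in _ + (_ + X)]big_nat_cond [X in _ + (_ + X)]big1; last first.
  by move=> i /andP[/andP[le_i _] _]; case: eqP => //= ?; lia.
rewrite big_nat_cond (eq_bigr (fun _ => 1)); last first.
  move=> i /andP[/andP[le_i lt_i] _].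
  have -> : i = j * b + (i - j * b) by lia.
  by rewrite divnMDl // divn_small ?addn0 ?eqxx //; lia.
by rewrite -big_nat_cond sum_nat_const_nat; lia.
Qed.

Lemma card_ord_geq n c : #|[set i : 'I_n | c <= i]| = n - c.
Proof.
rewrite (card_ord_pred n (fun i => c <= i)); case: (leqP c n) => le_c_n; last first.
  rewrite big_nat_cond big1; first by lia.
  by move=> i /andP[/andP[_ lt_i] _]; case: leqP => //= ?; lia.
rewrite (big_cat_nat (n := c)) //= big_nat_cond big1; last first.
  by move=> i /andP[/andP[_ lt_i] _]; case: leqP => //= ?; lia.
rewrite big_nat_cond (eq_bigr (fun _ => 1)); last first.
  by move=> i /andP[/andP[le_i _] _]; case: leqP => //= ?; lia.
by rewrite -big_nat_cond sum_nat_const_nat; lia.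
Qed.

Lemma sum_ord_eq m k : \sum_(j < m) (k == j :> nat) = (k < m).
Proof.
case: (ltnP k m) => [lt_k_m | le_m_k].
  rewrite (bigD1 (Ordinal lt_k_m)) //= eqxx big1 // => j ne_jk.
  by apply/eqP; rewrite eqb0; apply: contra ne_jk => /eqP eq_kj; apply/eqP/val_inj.
by rewrite big1 // => j _; apply/eqP; rewrite eqb0; have := ltn_ord j; lia.
Qed.

(* Pigeonhole over blocks: a set T covering more than a (r+2)/(2r) fraction of [n]
   meets some block in at least th = (r+1)/(2r) * b points, provided r blocks fit in [n]. *)
Lemma block_averaging n b th r (T : {set 'I_n}) : 0 < r -> 0 < b ->
  th * (2 * r) = r.+1 * b -> r * b <= n -> r.+2 * n <= 2 * r * #|T| ->
  exists j : 'I_(n %/ b), th <= #|T :&: block n b j|.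
Proof.
move=> r_gt0 b_gt0 th_eq le_rb_n large_T; set m := n %/ b.
have [/existsP [j le_th] | /existsPn small] :=
  boolP [exists j : 'I_m, th <= #|T :&: block n b j|]; first by exists j.
have {}small (j : 'I_m) : #|T :&: block n b j| <= th.-1.
  by have := small j; rewrite -ltnNge; case: (th) {th_eq small}.
have card_T : #|T| <= m * th.-1 + (n - m * b).
  rewrite -sum1_card.
  apply: (@leq_trans (\sum_(i in T) ((i %/ b < m) + (m * b <= i)))).
    apply: leq_sum => i _; case: (ltnP (i %/ b) m) => //= le_m_ib.
    by rewrite -leq_divRL // le_m_ib.
  rewrite big_split /=; apply: leq_add.
    rewrite (eq_bigr (fun i : 'I_n => \sum_(j < m) (i %/ b == j :> nat))); last first.
      by move=> i _; rewrite sum_ord_eq.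
    rewrite exchange_big /= -[m in X in _ <= X]card_ord -sum_nat_const.
    apply: leq_sum => j _; apply: leq_trans (small j).
    rewrite -sum1_card [X in _ <= X]big_mkcond [X in X <= _]big_mkcond /=.
    by apply: leq_sum => i _; rewrite !inE; case: (i \in T); case: (i %/ b == j).
  rewrite -card_ord_geq -sum1_card [X in _ <= X]big_mkcond [X in X <= _]big_mkcond /=.
  by apply: leq_sum => i _; rewrite inE; case: (i \in T).
have lt_n : n < m * b + b by rewrite /m {1}(divn_eq n b) ltn_add2l ltn_pmod.
have le_n : m * b <= n by rewrite /m leq_divM.
clear small; move: card_T lt_n le_n th_eq le_rb_n large_T; move: #|T| m => t m'; nia.
Qed.

Lemma card_bigcup_le (T J : finType) (F : J -> {set T}) :
  #|\bigcup_j F j| <= \sum_j #|F j|.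
Proof.
elim/big_rec2: _ => [|j s U _ le_U_s]; first by rewrite cards0.
by rewrite (leq_trans (leq_card_setU _ _).1) ?leq_add2l.
Qed.

Definition balanced n b th (x : cube n) : bool :=
  [forall j : 'I_(n %/ b), zeros (block n b j) x < th].

Lemma unbalanced_count n r L : 0 < r ->
  #|[set x : cube n |
      ~~ balanced (2 * r * (moment r * L)) (r.+1 * (moment r * L)) x]| * 2 ^ L
  <= n %/ (2 * r * (moment r * L)) * 2 ^ n.
Proof.
move=> r_gt0; set b := 2 * r * _; set th := r.+1 * _; set m := n %/ b.
pose tail (j : 'I_m) := [set x : cube n | th <= zeros (block n b j) x].
have bad_sub : [set x : cube n | ~~ balanced b th x] \subset \bigcup_j tail j.
  apply/subsetP => x; rewrite inE => /forallPn [j]; rewrite -leqNgt => le_th.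
  by apply/bigcupP; exists j; rewrite ?inE.
apply: leq_trans (leq_mul (subset_leq_card bad_sub) (leqnn _)) _.
apply: leq_trans (leq_mul (card_bigcup_le tail) (leqnn _)) _.
rewrite big_distrl /= -[m in X in _ <= X]card_ord -sum_nat_const.
apply: leq_sum => j _.
have b_gt0 : 0 < b.
  by move: (nat_of_ord j) (ltn_ord j) => k; rewrite /m; case: posnP => // ->; rewrite divn0.
have card_j : #|block n b j| = b.
  by apply: card_block => //; rewrite -leq_divRL //; exact: ltn_ord.
by have := block_tail r_gt0 card_j; rewrite card_ord.
Qed.

Lemma glue_outside n (S : {set 'I_n}) (u : Omega (~: S)) (v : Omega S)
    (k : {i : 'I_n | i \in ~: S}) :
  glue u v (val k) = u k.
Proof.
have kS : val k \notin S by have := valP k; rewrite inE.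
by rewrite /glue ffunE insubN // valK.
Qed.

Lemma card_sig_set n (T D : {set 'I_n}) :
  #|[set k : {i | i \in T} | val k \in D]| = #|T :&: D|.
Proof.
have -> : T :&: D = val @: [set k : {i | i \in T} | val k \in D].
  apply/setP => i; rewrite inE; apply/andP/imsetP => [[iT iD] | [k]].
    by exists (exist _ i iT); rewrite ?inE.
  by rewrite inE => kD ->; rewrite (valP k).
by rewrite card_imset //; exact: val_inj.
Qed.

Lemma balanced_killing n b th r (S : {set 'I_n}) : 0 < r -> 0 < b ->
  th * (2 * r) = r.+1 * b -> r * b <= n -> r.+2 * n <= 2 * r * #|~: S| ->
  exists2 A : {set {i : 'I_n | i \in ~: S}}, #|A| = th &
    forall (u : Omega (~: S)) (v : Omega S),
      (forall k, k \in A -> u k = false) -> ~~ balanced b th (glue u v).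
Proof.
move=> r_gt0 b_gt0 th_eq le_rb_n large_S.
have [j] := block_averaging r_gt0 b_gt0 th_eq le_rb_n large_S.
rewrite -card_sig_set => /exists_subset_card [A sub_A card_A].
exists A => // u v vanish; apply/forallPn; exists j; rewrite -leqNgt -card_A /zeros.
rewrite -(card_imset _ val_inj); apply: subset_leq_card.
apply/subsetP => _ /imsetP [k kA ->]; have := subsetP sub_A k kA.
by rewrite !inE => ->; rewrite glue_outside vanish.
Qed.

Lemma linear_below_exp a : exists k0, forall k, k0 <= k -> a * k.+1 <= 2 ^ k.
Proof.
have base : a * (2 * a).+1 <= 2 ^ (2 * a).
  elim: a => // a IH; rewrite (_ : 2 * a.+1 = (2 * a).+2) ?expnS; last by lia.
  have : 0 < 2 ^ (2 * a) by rewrite expn_gt0.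
  by move: IH; move: (2 ^ (2 * a)) => X; nia.
exists (2 * a).+1; elim=> // k IH; rewrite leq_eqVlt => /orP [/eqP <- | lt_k].
  by move: base; rewrite expnS; lia.
by move: (IH lt_k); rewrite expnS; lia.
Qed.

Lemma balanced_dense n r c0 k : 0 < r -> n < 2 ^ k.+1 ->
  #|[set x : cube n | ~~ balanced (2 * r * (moment r * (c0 + k + 1)))
                                  (r.+1 * (moment r * (c0 + k + 1))) x]| * 2 ^ c0
  < 2 ^ n.
Proof.
move=> r_gt0 lt_n_2k; set L := c0 + k + 1.
have := unbalanced_count n L r_gt0.
have -> : 2 ^ L = 2 ^ c0 * 2 ^ k.+1 by rewrite -expnD /L; congr (_ ^ _); lia.
have := leq_div n (2 * r * (moment r * L)); have : 0 < 2 ^ n by rewrite expn_gt0.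
move: lt_n_2k; move: #|[set x | _]| (n %/ _) (2 ^ c0) (2 ^ k.+1) (2 ^ n) => bad m c X Y.
nia.
Qed.

Lemma exp_log_poly n E c k : 2 ^ k <= n -> 2 ^ (E * c.+1) < n ->
  2 ^ (E * (c + k + 1)) < n ^ E.+1.
Proof.
move=> le_2k_n lt_n; rewrite (_ : c + k + 1 = c.+1 + k); last by lia.
rewrite mulnDr expnD expnS (mulnC E k) (expnM 2 k E).
have le_pow : (2 ^ k) ^ E <= n ^ E by elim: E {lt_n} => // E IH; rewrite !expnS leq_mul.
apply: leq_ltn_trans (leq_mul (leqnn _) le_pow) _.
by rewrite ltn_pmul2r // expn_gt0; apply/orP; left; lia.
Qed.

(* Blocks have length b = 2r * moment r * (c0 + log2 n + 1). *)
Lemma balanced_family r c0 : 0 < r -> exists2 E, 0 < E & exists N, forall n, N <= n ->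
  exists2 G : {set cube n}, #|~: G| * 2 ^ c0 < 2 ^ n &
  forall S : {set 'I_n}, r.+2 * n <= 2 * r * #|~: S| ->
  exists2 A : {set {i : 'I_n | i \in ~: S}}, 2 ^ #|A| < n ^ E &
    forall (u : Omega (~: S)) (v : Omega S),
      (forall k, k \in A -> u k = false) -> glue u v \notin G.
Proof.
move=> r_gt0; set P := moment r; set E := r.+1 * P.
have P_gt0 : 0 < P by rewrite expn_gt0.
have [k0 exp_large] := linear_below_exp (2 * r * r * P * c0.+1).
exists E.+1 => //; exists (2 ^ k0 + 2 ^ (E * c0.+1)).+1 => n le_N_n.
set k := trunc_log 2 n; set L := c0 + k + 1.
set b := 2 * r * (P * L); set th := r.+1 * (P * L).
have le_2k_n : 2 ^ k <= n by apply: trunc_logP; lia.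
have le_k0_k : k0 <= k by apply: trunc_log_max => //; lia.
exists [set x | balanced b th x].
  rewrite (_ : ~: _ = [set x | ~~ balanced b th x]); last by apply/setP => x; rewrite !inE.
  exact: balanced_dense r_gt0 (trunc_log_ltn _ _).
move=> S large_S.
have fits : r * b <= n by have := exp_large k le_k0_k; rewrite /b /L; nia.
have b_gt0 : 0 < b by rewrite /b /L !muln_gt0 r_gt0 P_gt0 addn1.
have th_eq : th * (2 * r) = r.+1 * b by rewrite /th /b -mulnA (mulnC (P * L)).
have [A card_A kill] := balanced_killing r_gt0 b_gt0 th_eq fits large_S.
exists A; last by move=> u v /kill; rewrite inE.
by rewrite card_A /th mulnA -/E; apply: exp_log_poly => //; lia.
Qed.

Local Open Scope R_scope.

Lemma INR_expn m k : INR (m ^ k)%N = INR m ^ k.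
Proof. by elim: k => // k IH; rewrite expnS mulnE mult_INR IH. Qed.

Lemma INR_two_expn k : INR (2 ^ k)%N = 2 ^ k.
Proof. by rewrite INR_expn (_ : INR 2 = 2) //=; lra. Qed.

Lemma Jplus_killed n (S : {set 'I_n}) (f : cube n -> bool)
    (A : {set {i : 'I_n | i \in ~: S}}) :
  (forall (u : Omega (~: S)) (v : Omega S),
     (forall k, k \in A -> u k = false) -> ~~ f (glue u v)) ->
  Jplus S f <= 1 - / 2 ^ #|A|.
Proof.
move=> kill; rewrite /Jplus card_ffun card_bool.
set U := [set u | _]; set d := #|{: {i : 'I_n | i \in ~: S}}|.
have /leP/le_INR : (#|U| * 2 ^ #|A| + 2 ^ d <= 2 ^ d * 2 ^ #|A|)%N.
  apply: avoiding_count => u /kill killed; rewrite inE; apply/existsPn => v.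
  exact: killed.
rewrite addnE !mulnE plus_INR !mult_INR !INR_two_expn.
have d_gt0 : 0 < 2 ^ d by apply: pow_lt; lra.
have a_gt0 : 0 < 2 ^ #|A| by apply: pow_lt; lra.
move: (INR #|U|) (2 ^ d) (2 ^ #|A|) d_gt0 a_gt0 => x D T D_gt0 T_gt0 le_x.
apply: (Rmult_le_reg_r (D * T)); first by nra.
replace (x / D * (D * T)) with (x * T) by (field; lra).
replace ((1 - / T) * (D * T)) with (D * T - D) by (field; lra).
lra.
Qed.

Lemma mu_set n (B : {set cube n}) : mu (fun x => x \in B) = INR #|B| / 2 ^ n.
Proof.
rewrite /mu card_ffun card_bool card_ord INR_two_expn.
by congr (INR _ / _); apply: eq_card => x; rewrite inE.
Qed.

Lemma nat_above x : 0 < x -> exists m : nat, x <= INR m.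
Proof.
move=> x_gt0; have [m [inv_lt /ltP m_gt0]] := archimed_cor1 (/ x) (Rinv_0_lt_compat _ x_gt0).
exists m; have m_pos : 0 < INR m by apply: lt_0_INR; apply/ltP.
rewrite -(Rinv_inv x) -(Rinv_inv (INR m)); apply: Rlt_le; apply: Rinv_lt_contravar => //.
by apply: Rmult_lt_0_compat; apply: Rinv_0_lt_compat.
Qed.

Lemma ceil_exists x : 0 < x -> exists k : nat, is_ceil x k.
Proof.
move=> x_gt0; have [m] := nat_above x_gt0; elim: m => [|m IH] le_x_m.
  by move: le_x_m; rewrite /=; lra.
case: (Rle_lt_dec x (INR m)) => [/IH // | lt_m_x].
by exists m.+1; rewrite /is_ceil S_INR; rewrite S_INR in le_x_m; lra.
Qed.

Lemma nat_mul_above d : 0 < d -> exists2 r : nat, (0 < r)%N & 1 <= INR r * d.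
Proof.
move=> d_gt0; have [r le_r] := nat_above (Rinv_0_lt_compat _ d_gt0).
have r_gt0 : 0 < INR r by apply: Rlt_le_trans le_r; apply: Rinv_0_lt_compat.
exists r; first by apply/ltP; apply: INR_lt; rewrite /=.
rewrite -(Rinv_l d); last by lra.
by apply: Rmult_le_compat_r; lra.
Qed.

Lemma pow2_mul_above d : 0 < d -> exists c : nat, 1 <= 2 ^ c * d.
Proof.
move=> d_gt0; have [c _ le_c] := nat_mul_above d_gt0; exists c.
have /ltP/lt_INR : (c < 2 ^ c)%N by apply: ltn_expl.
by rewrite INR_two_expn => lt_c; apply: Rle_trans le_c _; apply: Rmult_le_compat_r; lra.
Qed.

Lemma free_coordinates_large n (S : {set 'I_n}) r delta :
  1 <= INR r * delta -> is_floor ((1/2 - delta) * INR n) #|S| ->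
  (r.+2 * n <= 2 * r * #|~: S|)%N.
Proof.
move=> r_delta [small_S _]; apply/leP/INR_le.
have /(f_equal INR) : (#|S| + #|~: S| = n)%N by rewrite cardsC card_ord.
move: small_S; move: #|S| #|~: S| => s c small_S.
rewrite !mulnE !mult_INR addnE plus_INR !S_INR.
have n_ge0 := pos_INR n; have r_ge0 := pos_INR r.
have : 0 <= (INR r * delta - 1) * INR n by apply: Rmult_le_pos; lra.
have : 0 <= INR r * ((1/2 - delta) * INR n - INR s) by apply: Rmult_le_pos; lra.
rewrite /= => r_small gain sum_eq.
have -> : INR c = INR n - INR s by lra.
nra.
Qed.

Lemma ceil_le_card n alpha c0 (G : {set cube n}) K :
  1 <= 2 ^ c0 * (1 - alpha) -> (#|~: G| * 2 ^ c0 < 2 ^ n)%N ->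
  is_ceil (alpha * 2 ^ n) K -> (K <= #|G|)%N.
Proof.
move=> c0_alpha /ltP/lt_INR small_Gc [K_lt _]; rewrite -ltnS; apply/ltP/INR_lt.
have /(f_equal INR) : (#|G| + #|~: G| = 2 ^ n)%N.
  by rewrite cardsC card_ffun card_bool card_ord.
move: small_Gc; rewrite S_INR mulnE addnE mult_INR plus_INR !INR_two_expn.
have := pos_INR #|~: G|; have : 0 < 2 ^ c0 by apply: pow_lt; lra.
move: (INR #|G|) (INR #|~: G|) (2 ^ c0) (2 ^ n) K_lt c0_alpha.
move=> g b C P K_lt c0_alpha C_gt0 b_ge0 lt_bC sum_eq.
have alpha_lt1 : 0 < 1 - alpha by nra.
have : b <= b * (C * (1 - alpha)) by nra.
have : b * C * (1 - alpha) < P * (1 - alpha) by apply: Rmult_lt_compat_r.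
nra.
Qed.

Lemma killed_fraction_bound n a E : (2 ^ a < n ^ E)%N ->
  1 - / 2 ^ a < 1 - Rpower (INR n) (- INR E).
Proof.
move=> lt_pow.
have n_gt0 : (0 < n)%N.
  case: posnP lt_pow => // ->; have := expn_gt0 2 a.
  by case: E => [|E]; rewrite ?expn0 ?exp0n //; lia.
have /ltP/lt_INR := lt_pow; rewrite INR_two_expn INR_expn => lt_pow_R.
rewrite Rpower_Ropp Rpower_pow; last by apply: lt_0_INR; apply/ltP.
suff : / INR n ^ E < / 2 ^ a by lra.
apply: Rinv_lt_contravar lt_pow_R; apply: Rmult_lt_0_compat; apply: pow_lt; first by lra.
by apply: lt_0_INR; apply/ltP.
Qed.

Unset Implicit Arguments.

Theorem theorem1p1 (alpha delta : R) (Ha : 0 < alpha < 1) (Hd : 0 < delta < 1) :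
  exists C : R, 0 < C /\
  exists N : nat, forall n : nat, (N <= n)%nat ->
  exists f : cube n -> bool,
    (exists k : nat, is_ceil (alpha * 2 ^ n) k /\ mu f = INR k / 2 ^ n) /\
    forall S : {set 'I_n},
      is_floor ((1/2 - delta) * INR n) #|S| ->
      Jplus S f < 1 - Rpower (INR n) (- C).
Proof.
have [r r_gt0 r_delta] := nat_mul_above (proj1 Hd).
have [c0 c0_alpha] : exists c0 : nat, 1 <= 2 ^ c0 * (1 - alpha).
  by apply: pow2_mul_above; lra.
have [E E_gt0 [N family]] := balanced_family c0 r_gt0.
exists (INR E); split; first by apply: lt_0_INR; apply/ltP.
exists N => n le_N_n; have [G G_dense G_killed] := family n le_N_n.
have [K K_ceil] : exists K, is_ceil (alpha * 2 ^ n) K.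
  by apply: ceil_exists; apply: Rmult_lt_0_compat; [lra | apply: pow_lt; lra].
have [B sub_BG card_B] := exists_subset_card (ceil_le_card c0_alpha G_dense K_ceil).
exists (fun x => x \in B); split; first by exists K; rewrite mu_set card_B.
move=> S /(free_coordinates_large r_delta) /G_killed [A A_small A_kills].
apply: Rle_lt_trans (killed_fraction_bound A_small).
apply: Jplus_killed => u v vanish.
exact: contra (subsetP sub_BG _) (A_kills u v vanish).
Qed.
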